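(* Assume $t_\infty<\infty$. Fix $\theta_0\in(e^{-\tau_{\min}},e^{-\tau_{\min}/2})$ and define $$s_*(t):=\frac{t\,|P'_{*,-}(t)|}{|P'_{*,-}(t)|+(\log\theta_0)/2},\qquad t\in(0,t_\infty).$$ Then there exists $t_*\in(0,t_\infty)$ such that $s_*:=s_*(t_* )>t_\infty$.
   Context: Setting: $Q=\mathbb{T}^2\setminus\bigcup_i\mathcal{O}_i$ is a Sinai billiard table (finitely many pairwise disjoint convex closed domains $\mathcal{O}_i$ in the two-torus with $C^3$ boundaries of strictly positive curvature $\mathcal{K}$) with finite horizon (no trajectory makes only tangential collisions). $T:M\to M$, $M=\partial Q\times[-\pi/2,\pi/2]$ (coordinates $(r,\varphi)$), is the billiard map, $\tau(x)$ the free flight time from $x$ to $T(x)$, $\tau_{\min}=\inf\tau>0$, $\tau_{\max}=\sup\tau<\infty$, $\mathcal{K}_{\min}=\inf\mathcal{K}$, $\Lambda=1+2\tau_{\min}\mathcal{K}_{\min}$, $\Sigma_n\tau=\sum_{k=0}^{n-1}\tau\circ T^k$. $\mathcal{S}_0=\{\varphi=\pm\pi/2\}$ and for $n\in\mathbb{Z}\setminus\{0\}$, $\mathcal{S}_n=\bigcup T^i\mathcal{S}_0$ over integers $i$ between $0$ and $-n$ inclusive. For $n\ge1$, $\mathcal{M}_0^n$ is the set of maximal connected components of $M\setminus\mathcal{S}_n$, $Q_n(t)=\sum_{A\in\mathcal{M}_0^n}\sup_Ae^{-t\Sigma_n\tau}$ and $P_*(t)=\lim_n\frac1n\log Q_n(t)$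 for $t\ge0$. For $t>0$, $P'_{*,-}(t)=\lim_{s\uparrow t}\frac{P_*(t)-P_*(s)}{t-s}$ (it exists and lies in $[-\tau_{\max},-\tau_{\min}]$). Hyperbolicity: there are continuous stable and unstable cone families $\mathcal{C}^s,\mathcal{C}^u$ (constant on $M$) and $C_1\in(0,1)$ with $\|DT^n(x)v\|\ge C_1\Lambda^n\|v\|$ for $v\in\mathcal{C}^u$ and $\|DT^{-n}(x)v\|\ge C_1\Lambda^n\|v\|$ for $v\in\mathcal{C}^s$. $K\ge1$ is a constant such that for all $n\ge0$ the number of curves of $\mathcal{S}_{\pm n}$ meeting at a single point is at most $Kn$. $\delta_0\in(0,1/C_1)$ is a fixed length scale such that, for a fixed integer $m\ge1$, every stable curve of length at most $\delta_0$ is cut by $\mathcal{S}_{-\ell}$ into at most $K\ell+1$ components for $0\le\ell\le2m$. Curves: $\widehat{\mathcal{W}}^s$ is the set of curves with tangent vectors in $\mathcal{C}^s$, length at most $\delta_0$ and curvature at most a constant $C_{\mathcal{K}}$ chosen so that $T^{-1}\widehat{\mathcal{W}}^s\subset\widehat{\mathcal{W}}^s$ up to subdivision. Length scales have the form $\delta=\delta_0/2^N$. For $W\in\widehat{\mathcal{W}}^s$: $\mathcal{G}_0^\delta(W)=\{W\}$, and $\mathcal{G}_n^\delta(W)$ is the set of smooth components of $T^{-1}W'$, $W'\in\mathcal{G}_{n-1}^\delta(W)$, where each component of length $\ell\delta+\rho$ ($\ell\ge1$, $0\le\rho<\delta$) is subdivided: if $\rho=0$ into $\ell$ pieces of length $\delta$;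 if $\rho\ge\delta/2$ into $\ell$ pieces of length $\delta$ and one of length $\rho$ at an end; if $0<\rho<\delta/2$ into $\ell-1$ pieces of length $\delta$, one of length $\delta/2$ at one end and one of length $\rho+\delta/2$ at the other end. $L_n^\delta(W)$: elements of $\mathcal{G}_n^\delta(W)$ of length $\ge\delta/3$; $S_n^\delta(W)=\mathcal{G}_n^\delta(W)\setminus L_n^\delta(W)$. For $t\ge0$, $\mathcal{G}_n^\delta(W,t)$, $L_n^\delta(W,t)$, $S_n^\delta(W,t)$ denote $\sum\sup_{W_i}e^{-t\Sigma_n\tau}$ over $W_i$ in $\mathcal{G}_n^\delta(W)$, $L_n^\delta(W)$, $S_n^\delta(W)$ respectively. Time reversal: replace $T$ by $T^{-1}$, $\widehat{\mathcal{W}}^s$ by the analogous class $\widehat{\mathcal{W}}^u$ of unstable curves, and $\Sigma_n\tau$ by $\sum_{i=1}^n\tau\circ T^{-i}$. Small Singular Pressure (SSP): fix $\delta_1=\delta_0/2^{N_1}<\delta_0$ and $n_1\ge m$ such that $\#L_n^{\delta_1}(W)\ge\frac23\#\mathcal{G}_n^{\delta_1}(W)$ for every stable curve $W$ with $|W|\ge\delta_1/3$ and $n\ge n_1$. SSP.1 holds at $t\ge0$ if there exist $\delta_t=\delta_0/2^{N_t}\in(0,\delta_1]$ and finite $n_t\ge n_1$ such that (a) $S_n^{\delta_t}(W,t)/\mathcal{G}_n^{\delta_t}(W,t)\le1/4$ for all $n\ge n_t$ and all $W\in\widehat{\mathcal{W}}^s$ with $|W|\ge\delta_t/3$, and (b)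 $\sum_{n\ge n_t}\sup_{W\in\widehat{\mathcal{W}}^s,|W|\ge\delta_t/3}e^{-nt\tau_{\min}}/L_n^{\delta_t}(W,t)<\infty$, and the time reversals of (a) and (b) both hold. SSP.2 holds at $t$ (with these $\delta_t,n_t$) if for every $W\in\widehat{\mathcal{W}}^s$ there exists $n_t^*(|W|,\delta_t)\in[n_t,\infty)$ with $S_n^{\delta_t}(W,t)/\mathcal{G}_n^{\delta_t}(W,t)\le1/2$ for all $n\ge n_t^*(|W|,\delta_t)$, and its time reversal also holds. Define $t_\infty=\sup\{t'\ge0:$ SSP.1 and SSP.2 hold for all $0\le t\le t'\}$; it is known that $t_\infty\ge\log\Lambda/(\tau_{\max}-\tau_{\min})>0$. *)

From HB Require Import structures.
From mathcomp Require Import all_boot all_order all_algebra.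
From mathcomp Require Import all_classical all_reals all_analysis.
Set Implicit Arguments. Unset Strict Implicit. Unset Printing Implicit Defensive.
Import Order.TTheory GRing.Theory Num.Theory.
Import numFieldNormedType.Exports.
Local Open Scope ring_scope.
Local Open Scope classical_set_scope.

Definition left_deriv (R : realType) (f : R -> R) (t l : R) : Prop :=
  (fun s => (f t - f s) / (t - s)) @ t^'- --> l.

(* s_*(t) = t |P'_{*,-}(t)| / (|P'_{*,-}(t)| + (log theta0)/2),
   written as a function of the value d = P'_{*,-}(t). *)
Definition s_star (R : realType) (theta0 t d : R) : R :=
  t * `|d| / (`|d| + ln theta0 / 2).

From HB Require Import structures.
From mathcomp Require Import all_boot all_order all_algebra.
From mathcomp Require Import all_classical all_reals all_analysis.
From mathcomp Require Import ring lra.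
Import Order.TTheory GRing.Theory Num.Theory.
Import numFieldNormedType.Exports.
Local Open Scope ring_scope.

(* With c := (log theta0)/2 in (-tau_min/2, 0), the map x |-> x/(x + c) is
   decreasing on (-c, oo), and |P'_{*,-}| <= tau_max, so
   s_*(t) >= t q with q := tau_max/(tau_max + c) > 1.  Hence any t in
   (t_inf/q, t_inf) satisfies s_*(t) > t_inf. *)

Lemma ln_gt_lt_expR {R : realType} {a b x : R} :
  expR a < x < expR b -> a < ln x < b.
Proof.
case/andP=> ax xb; have x_gt0 : 0 < x by apply: lt_trans ax; exact: expR_gt0.
have lnxK : expR (ln x) = x by apply: lnK; rewrite posrE.
by rewrite -lnxK !ltr_expR in ax xb; rewrite ax xb.
Qed.

Lemma ler_shifted_ratio {R : realFieldType} (c x y : R) :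
  c < 0 -> - c < x <= y -> y / (y + c) <= x / (x + c).
Proof.
move=> c_lt0 /andP[cx xy].
have xc_gt0 : 0 < x + c by lra.
have yc_gt0 : 0 < y + c by lra.
rewrite ler_pdivrMr // mulrAC ler_pdivlMr //.
by rewrite !mulrDr (mulrC y x) lerD2l ler_nM2r.
Qed.

Lemma s_star_ge_scaled {R : realType} (theta0 t d M : R) :
  0 <= t -> ln theta0 < 0 -> - (ln theta0 / 2) < `|d| <= M ->
  t * (M / (M + ln theta0 / 2)) <= s_star theta0 t d.
Proof.
move=> t_ge0 ln_lt0 dM; rewrite /s_star -mulrA ler_wpM2l //.
by apply: ler_shifted_ratio => //; lra.
Qed.

Lemma exists_lt_scaled_gt {R : realFieldType} {a q : R} :
  0 < a -> 1 < q -> exists2 t, 0 < t < a & a < t * q.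
Proof.
move=> a_gt0 q_gt1; have q_gt0 : 0 < q by lra.
have qV_lt1 : q^-1 < 1 by rewrite invf_lt1.
exists (a * (1 + q^-1) / 2).
  rewrite divr_gt0 ?mulr_gt0 ?addr_gt0 ?invr_gt0 //=.
  by rewrite ltr_pdivrMr // ltr_pM2l //; lra.
have -> : a * (1 + q^-1) / 2 * q = a * (q + 1) / 2 by field; rewrite gt_eqF.
by rewrite ltr_pdivlMr // ltr_pM2l //; lra.
Qed.

Theorem lemma4p1 (R : realType) (tau_min tau_max : R) (Pstar : R -> R)
    (t_inf theta0 : R)
    (htau : 0 < tau_min <= tau_max)
    (* known: for t > 0 the left derivative P'_{*,-}(t) exists and lies in
       [-tau_max, -tau_min] *)
    (hP : forall t, 0 < t -> exists2 d, left_deriv Pstar t d &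
                                        - tau_max <= d <= - tau_min)
    (* known: t_inf > 0; the hypothesis t_inf < oo is encoded by t_inf : R *)
    (ht_inf : 0 < t_inf)
    (htheta : expR (- tau_min) < theta0 < expR (- tau_min / 2)) :
  exists t_star, [/\ 0 < t_star < t_inf &
    exists d, left_deriv Pstar t_star d /\ t_inf < s_star theta0 t_star d].
Proof.
case/andP: htau => tau_min_gt0 tau_le.
case/andP: (ln_gt_lt_expR htheta) => ln_gt ln_lt.
set c := ln theta0 / 2.
have q_gt1 : 1 < tau_max / (tau_max + c).
  by rewrite ltr_pdivlMr /c; lra.
have [t /andP[t_gt0 t_lt] t_scaled] := exists_lt_scaled_gt ht_inf q_gt1.
have [d d_deriv /andP[d_ge d_le]] := hP t t_gt0.
exists t; split; first by rewrite t_gt0 t_lt.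
exists d; split => //; apply: (lt_le_trans t_scaled).
apply: s_star_ge_scaled; [exact: ltW | lra |].
by rewrite ler0_norm; lra.
Qed.
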